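(* Let $\vec f=(f_1,\dots,f_n)$ be a profile of acknowledgement-based protocols, let $i\in[n]$, and fix a protocol $f_i'$ for player $i$. For $\tau^*\ge1$ and a history $h_{i,\tau^*}=(a_{i,1},\dots,a_{i,\tau^*})$ consistent with $(\vec f_{-i},f_i')$, let $r_i(h_{i,\tau^*})$ be the protocol that plays $a_{i,t}$ with probability $1$ at each slot $1\le t\le\tau^*$ and follows $f'_{i,t}$ for $t>\tau^*$. If there exists a finite $\tau^*\ge1$ such that $C_i^{(\vec f_{-i},r_i(h_{i,\tau^*}))}(h_0)\ge C_i^{(\vec f_{-i},f_i)}(h_0)$ for every such $h_{i,\tau^*}$, then $C_i^{(\vec f_{-i},f_i')}(h_0)\ge C_i^{(\vec f_{-i},f_i)}(h_0)$.
   Context: Contention game: $n$ players, channels $K=\{1,\dots,k\}$, slots $t=1,2,\dots$; each player has one packet, initially pending; in each slot a pending player chooses (possibly randomly) an action in $\{0,1,\dots,k\}$ ($0$ = idle, $a$ = transmit on channel $a$); a lone transmitter on a channel succeeds and leaves, colliding transmitters remain pending. Acknowledgement-based protocols: decision rules depend only on the player's personal action history; only transmitting players learn whether they succeeded. $T_i$ is player $i$'s latency and $C_i^{\vec g}(h_0)=\mathbb E[T_i\mid \vec g]$ her unconditional expected latency under profile $\vec g$; $(\vec f_{-i},g_i)$ is $\vec f$ with $f_i$ replaced by $g_i$. A history is consistent with a profile if it occurs for player $i$ with positive probability under it. *)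

From HB Require Import structures.
From mathcomp Require Import all_boot all_order all_algebra.
From mathcomp Require Import all_classical all_reals all_analysis.
Set Implicit Arguments. Unset Strict Implicit. Unset Printing Implicit Defensive.
Import Order.TTheory GRing.Theory Num.Theory.
Local Open Scope ring_scope.

(* Actions: 'I_k.+1, with ord0 = idle and a = transmit on channel a (1..k). *)
Definition action (k : nat) := 'I_k.+1.
(* A joint action profile in one slot (departed players are recorded idle). *)
Definition aprof (n k : nat) := {ffun 'I_n -> 'I_k.+1}.

(* Acknowledgement-based protocol: given the player's personal action history
   (the actions taken in slots 1..t-1; all earlier transmissions of a pending
   player failed, so feedback is implicit), the probability of each action
   at slot t = size h + 1. *)
Definition protocol (R : realType) (k : nat) := seq 'I_k.+1 -> 'I_k.+1 -> R.

Definition is_protocol (R : realType) (k : nat) (f : protocol R k) : Prop :=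
  forall h : seq 'I_k.+1, (forall a, 0 <= f h a) /\ \sum_(a < k.+1) f h a = 1.

Definition upd (R : realType) (n k : nat) (F : 'I_n -> protocol R k) (i : 'I_n)
  (g : protocol R k) : 'I_n -> protocol R k :=
  fun j => if j == i then g else F j.

Definition succeeds (n k : nat) (p : aprof n k) (j : 'I_n) : bool :=
  (p j != ord0) && [forall l : 'I_n, (l != j) ==> (p l != p j)].

Definition pending_after (n k : nat) (tr : seq (aprof n k)) (j : 'I_n) : bool :=
  all (fun p : aprof n k => ~~ succeeds p j) tr.

Definition phist (n k : nat) (tr : seq (aprof n k)) (j : 'I_n) : seq 'I_k.+1 :=
  map (fun p : aprof n k => p j) tr.

Definition slot_weight (R : realType) (n k : nat) (F : 'I_n -> protocol R k)
  (tr : seq (aprof n k)) (p : aprof n k) : R :=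
  \prod_(j < n) (if pending_after tr j then F j (phist tr j) (p j)
                 else ((p j == ord0) : bool)%:R).

Definition aprof0 (n k : nat) : aprof n k := [ffun => ord0].

Definition traj_weight (R : realType) (n k : nat) (F : 'I_n -> protocol R k)
  (tr : seq (aprof n k)) : R :=
  \prod_(s < size tr) slot_weight F (take s tr) (nth (aprof0 n k) tr s).

Definition prob_pending (R : realType) (n k : nat) (F : 'I_n -> protocol R k)
  (i : 'I_n) (t : nat) : R :=
  \sum_(tr : t.-tuple (aprof n k) | pending_after tr i) traj_weight F tr.

(* C_i^F(h_0) = E[T_i] = sum_{t>=0} P(T_i > t), in the extended reals *)
Definition latency (R : realType) (n k : nat) (F : 'I_n -> protocol R k)
  (i : 'I_n) : \bar R :=
  (\sum_(t <oo) (prob_pending F i t)%:E)%E.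

Definition replay (R : realType) (k : nat) (f' : protocol R k)
  (h : seq 'I_k.+1) : protocol R k :=
  fun g a => if (size g < size h)%N then ((a == nth ord0 h (size g)) : bool)%:R
             else f' g a.

Definition consistent (R : realType) (n k : nat) (F : 'I_n -> protocol R k)
  (i : 'I_n) (tau : nat) (h : tau.-tuple 'I_k.+1) : Prop :=
  0 < \sum_(tr : tau.-tuple (aprof n k) |
            [forall s : 'I_tau, pending_after (take s tr) i ==>
                                 (tnth tr s i == tnth h s)])
        traj_weight F tr.

From HB Require Import structures.
From mathcomp Require Import all_boot all_order all_algebra.
From mathcomp Require Import all_classical all_reals all_analysis.
Import Order.TTheory GRing.Theory Num.Theory.
Local Open Scope ring_scope.
Set Implicit Arguments. Unset Strict Implicit. Unset Printing Implicit Defensive.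

(* Player i's protocol randomizes on her personal history only, so drawing her
   first tau actions h according to f' and then running (F_{-i}, r_i(h)) yields
   exactly the process (F_{-i}, f').  Hence the trajectory law under f' is the
   mixture of the laws under r_i(h), with weight the probability P_{f'}(h) that
   f' alone produces h, and the latency under f' is the same convex combination
   of the latencies under r_i(h).  Every h of positive weight is consistent with
   (F_{-i}, f'), so each latency in the combination is at least C_i under F. *)

Section TupleBig.
Variables (R : Type) (idx : R) (op : Monoid.com_law idx) (T : finType).

Lemma big_tuple0 (G : seq T -> R) : \big[op/idx]_(h : 0.-tuple T) G h = G [::].
Proof. by rewrite (big_pred1 [tuple]) // => t; rewrite [t]tuple0 /= eqxx. Qed.

Lemma big_tuple_cons L (G : seq T -> R) :
  \big[op/idx]_(h : L.+1.-tuple T) G h =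
  \big[op/idx]_(a : T) \big[op/idx]_(h : L.-tuple T) G (a :: h).
Proof.
rewrite pair_bigA (reindex (fun p : T * L.-tuple T => [tuple of p.1 :: p.2])) //.
exists (fun t : L.+1.-tuple T => (thead t, [tuple of behead t])).
  by move=> [a h] _; congr pair; apply: val_inj.
by move=> t _; rewrite [RHS]tuple_eta; apply: val_inj.
Qed.

Lemma big_tuple_rcons L (G : seq T -> R) :
  \big[op/idx]_(h : L.+1.-tuple T) G h =
  \big[op/idx]_(h : L.-tuple T) \big[op/idx]_(a : T) G (rcons h a).
Proof.
elim: L G => [|L IH] G.
  rewrite big_tuple_cons (big_tuple0 (fun h => \big[op/idx]_a G (rcons h a))).
  by apply: eq_bigr => a _; rewrite (big_tuple0 (fun h => G (a :: h))).
rewrite big_tuple_cons (big_tuple_cons L (fun h => \big[op/idx]_a G (rcons h a))).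
by apply: eq_bigr => a _; rewrite (IH (fun h => G (a :: h))).
Qed.

End TupleBig.

Section Indicator.
Variables (V : pzSemiRingType) (I : finType).

Lemma sum_mul_indicator (w : I -> V) (c : I) :
  \sum_(a : I) w a * ((c == a) : bool)%:R = w c.
Proof.
rewrite (bigD1 c) //= eqxx mulr1 big1 ?addr0 // => a Ha.
by rewrite eq_sym (negbTE Ha) mulr0.
Qed.

Lemma sum_indicator (c : I) : \sum_(a : I) ((a == c) : bool)%:R = 1 :> V.
Proof.
rewrite -[RHS](sum_mul_indicator (fun=> 1) c).
by apply: eq_bigr => a _; rewrite mul1r eq_sym.
Qed.

End Indicator.

Section ChainWeight.
Variables (R : numDomainType) (T : finType) (w : seq T -> T -> R) (x0 : T).

Definition chain_weight (h : seq T) : R :=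
  \prod_(s < size h) w (take s h) (nth x0 h s).

Lemma chain_weight_nil : chain_weight [::] = 1.
Proof. exact: big_ord0. Qed.

Lemma chain_weight_rcons h a : chain_weight (rcons h a) = chain_weight h * w h a.
Proof.
rewrite /chain_weight size_rcons big_ord_recr /= -cats1 takel_cat //.
rewrite take_size nth_cat ltnn subnn; congr (_ * _).
by apply: eq_bigr => s _; rewrite takel_cat ?nth_cat ?ltn_ord // ltnW.
Qed.

Lemma chain_weight_ge0 h : (forall g a, 0 <= w g a) -> 0 <= chain_weight h.
Proof. by move=> w_ge0; apply: prodr_ge0 => s _. Qed.

Lemma sum_chain_weight L :
  (forall g, \sum_(a : T) w g a = 1) -> \sum_(h : L.-tuple T) chain_weight h = 1.
Proof.
move=> w_sum1; elim: L => [|L IH]; first by rewrite big_tuple0 chain_weight_nil.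
rewrite big_tuple_rcons -[RHS]IH; apply: eq_bigr => h _.
by under eq_bigr do rewrite chain_weight_rcons; rewrite -mulr_sumr w_sum1 mulr1.
Qed.

End ChainWeight.

Section Protocols.
Variables (R : realType) (n k : nat).
Implicit Types (F G : 'I_n -> protocol R k) (f : protocol R k).
Implicit Types (h g : seq 'I_k.+1) (tr : seq (aprof n k)).

Definition hist_weight f h : R := chain_weight f ord0 h.

Lemma hist_weight_ge0 f h : is_protocol f -> 0 <= hist_weight f h.
Proof. by move=> f_prot; apply: chain_weight_ge0 => g a; case: (f_prot g). Qed.

Lemma sum_hist_weight f L :
  is_protocol f -> \sum_(h : L.-tuple 'I_k.+1) hist_weight f h = 1.
Proof. by move=> f_prot; apply: sum_chain_weight => g; case: (f_prot g). Qed.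

Lemma is_protocol_replay f h : is_protocol f -> is_protocol (replay f h).
Proof.
move=> f_prot g; rewrite /replay; case: (size g < size h)%N; last exact: f_prot.
by split=> [a|]; [exact: ler0n | exact: sum_indicator].
Qed.

Lemma is_protocol_upd F i f :
  (forall j, is_protocol (F j)) -> is_protocol f -> forall j, is_protocol (upd F i f j).
Proof. by move=> F_prot f_prot j; rewrite /upd; case: eqP. Qed.

Lemma replay_nil f : replay f [::] = f.
Proof. by apply: funext => g; apply: funext => a; rewrite /replay ltn0. Qed.

Lemma replay_rcons_eq f h a g :
  size g != size h -> replay f (rcons h a) g = replay f h g.
Proof.
rewrite /replay size_rcons ltnS leq_eqVlt => /negbTE->.
by case: ltnP => // lt_gh; rewrite nth_rcons lt_gh.
Qed.

Lemma pending_after_take tr j s : pending_after tr j -> pending_after (take s tr) j.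
Proof. by rewrite /pending_after -{1}(cat_take_drop s tr) all_cat => /andP[]. Qed.

Lemma phist_take_eq tr j h :
  (size h <= size tr)%N -> pending_after (take (size h) tr) j ->
  (forall s : 'I_(size h), pending_after (take s tr) j ->
     nth (aprof0 n k) tr s j = nth ord0 h s) ->
  phist (take (size h) tr) j = h.
Proof.
move=> le_h_tr pend follows.
have size_phist : size (phist (take (size h) tr) j) = size h.
  by rewrite size_map size_takel.
apply: (eq_from_nth (x0 := ord0)) => // s; rewrite size_phist => lt_s_h.
rewrite (nth_map (aprof0 n k)) ?size_takel // nth_take //.
apply: (follows (Ordinal lt_s_h)).
by rewrite -(take_takel _ (ltnW lt_s_h)) pending_after_take.
Qed.

Lemma slot_weight_ge0 F tr p : (forall j, is_protocol (F j)) -> 0 <= slot_weight F tr p.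
Proof.
move=> F_prot; apply: prodr_ge0 => j _.
by case: ifP => _; [exact: (F_prot j _).1 | exact: ler0n].
Qed.

Lemma sum_slot_weight F tr :
  (forall j, is_protocol (F j)) -> \sum_(p : aprof n k) slot_weight F tr p = 1.
Proof.
move=> F_prot; rewrite /slot_weight.
transitivity (\prod_(j < n) \sum_(a < k.+1) (fun j (a : 'I_k.+1) =>
  if pending_after tr j then F j (phist tr j) a else ((a == ord0) : bool)%:R) j a).
  by rewrite bigA_distr_bigA.
apply: big1 => j _ /=.
by case: (pending_after tr j); [exact: (F_prot j _).2 | exact: sum_indicator].
Qed.

Lemma eq_slot_weight F G tr :
  (forall j, pending_after tr j -> F j (phist tr j) =1 G j (phist tr j)) ->
  slot_weight F tr =1 slot_weight G tr.
Proof.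
move=> eqFG p; apply: eq_bigr => j _.
by case: ifP => // pend; rewrite eqFG.
Qed.

Lemma slot_weight_upd F i f tr p :
  slot_weight (upd F i f) tr p =
  (\prod_(j < n | j != i) (if pending_after tr j then F j (phist tr j) (p j)
                           else ((p j == ord0) : bool)%:R)) *
  (if pending_after tr i then f (phist tr i) (p i) else ((p i == ord0) : bool)%:R).
Proof.
rewrite /slot_weight (bigD1 i) //= /upd eqxx mulrC; congr (_ * _).
by apply: eq_bigr => j /negbTE->.
Qed.

Lemma traj_weight_ge0 F tr : (forall j, is_protocol (F j)) -> 0 <= traj_weight F tr.
Proof. by move=> F_prot; apply: chain_weight_ge0 => g p; apply: slot_weight_ge0. Qed.

Lemma sum_traj_weight F t :
  (forall j, is_protocol (F j)) -> \sum_(tr : t.-tuple (aprof n k)) traj_weight F tr = 1.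
Proof. by move=> F_prot; apply: sum_chain_weight => g; apply: sum_slot_weight. Qed.

Section Replay.
Variables (F : 'I_n -> protocol R k) (i : 'I_n) (f : protocol R k).
Hypotheses (F_prot : forall j, is_protocol (F j)) (f_prot : is_protocol f).

Lemma traj_weight_replay_deviate h tr s :
  (s < size tr)%N -> (s < size h)%N -> pending_after (take s tr) i ->
  nth (aprof0 n k) tr s i != nth ord0 h s ->
  traj_weight (upd F i (replay f h)) tr = 0.
Proof.
move=> lt_s_tr lt_s_h pend deviates.
rewrite /traj_weight /chain_weight (bigD1 (Ordinal lt_s_tr)) //= slot_weight_upd.
rewrite pend /replay /phist size_map size_take lt_s_tr lt_s_h (negbTE deviates).
by rewrite mulr0 mul0r.
Qed.

Lemma slot_weight_replay_rcons h a tr s :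
  (s < size tr)%N -> (s != size h) || ~~ pending_after (take s tr) i ->
  slot_weight (upd F i (replay f (rcons h a))) (take s tr) =1
  slot_weight (upd F i (replay f h)) (take s tr).
Proof.
move=> lt_s_tr unaffected; apply: eq_slot_weight => j pend g.
rewrite /upd; case: eqP => [eq_ji|] //; rewrite replay_rcons_eq //.
rewrite size_map size_take lt_s_tr.
by move: unaffected; rewrite -eq_ji pend orbF.
Qed.

Lemma traj_weight_replay_rcons_idle h a tr :
  ~~ ((size h < size tr)%N && pending_after (take (size h) tr) i) ->
  traj_weight (upd F i (replay f (rcons h a))) tr =
  traj_weight (upd F i (replay f h)) tr.
Proof.
move=> idle; apply: eq_bigr => s _; apply: slot_weight_replay_rcons => //.
by case: eqP => //= eq_s_h; move: idle; rewrite -eq_s_h ltn_ord.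
Qed.

Lemma traj_weight_replay_rcons_pending h a tr :
  (size h < size tr)%N -> pending_after (take (size h) tr) i ->
  phist (take (size h) tr) i = h ->
  f h a * traj_weight (upd F i (replay f (rcons h a))) tr =
  traj_weight (upd F i (replay f h)) tr *
    ((a == nth (aprof0 n k) tr (size h) i) : bool)%:R.
Proof.
move=> lt_h_tr pend hist_h; set s0 := Ordinal lt_h_tr.
have split_at_s0 G : traj_weight G tr =
    slot_weight G (take (size h) tr) (nth (aprof0 n k) tr (size h)) *
    \prod_(s < size tr | s != s0) slot_weight G (take s tr) (nth (aprof0 n k) tr s).
  by rewrite /traj_weight /chain_weight (bigD1 s0).
have same_rest :
    \prod_(s < size tr | s != s0)
      slot_weight (upd F i (replay f (rcons h a))) (take s tr) (nth (aprof0 n k) tr s) =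
    \prod_(s < size tr | s != s0)
      slot_weight (upd F i (replay f h)) (take s tr) (nth (aprof0 n k) tr s).
  apply: eq_bigr => s ne_s_s0; apply: slot_weight_replay_rcons => //.
  case: eqP => //= eq_s; suff eq_s_s0 : s = s0 by rewrite eq_s_s0 eqxx in ne_s_s0.
  exact: val_inj.
rewrite !split_at_s0 same_rest !slot_weight_upd pend hist_h.
set rest := \prod_(s < size tr | s != s0) _.
rewrite /replay ltnn size_rcons ltnSn nth_rcons ltnn eqxx.
have [->|_] := eqVneq (nth (aprof0 n k) tr (size h) i) a; last first.
  by rewrite mulr0n !(mulr0, mul0r).
by rewrite mulr1n !mulr1 mulrCA mulrA.
Qed.

Lemma traj_weight_replay_step h tr :
  traj_weight (upd F i (replay f h)) tr =
  \sum_(a < k.+1) f h a * traj_weight (upd F i (replay f (rcons h a))) tr.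
Proof.
have [/andP [lt_h_tr pend] | idle] :=
  boolP ((size h < size tr)%N && pending_after (take (size h) tr) i); last first.
  under eq_bigr do rewrite traj_weight_replay_rcons_idle //.
  by rewrite -mulr_suml (f_prot h).2 mul1r.
have [/existsP [s /andP [pend_s deviates]] | /existsPn follows] := boolP
  [exists s : 'I_(size h), pending_after (take s tr) i &&
     (nth (aprof0 n k) tr s i != nth ord0 h s)].
  have lt_s_tr := ltn_trans (ltn_ord s) lt_h_tr.
  rewrite (traj_weight_replay_deviate lt_s_tr _ pend_s deviates) // big1 // => a _.
  rewrite (@traj_weight_replay_deviate (rcons h a) _ s) ?mulr0 //.
    by rewrite size_rcons ltnS ltnW.
  by rewrite nth_rcons ltn_ord.
have hist_h : phist (take (size h) tr) i = h.
  apply: phist_take_eq => // [|s pend_s]; first exact: ltnW.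
  by apply/eqP; move: (follows s); rewrite pend_s negbK.
under eq_bigr do rewrite traj_weight_replay_rcons_pending //.
by rewrite -mulr_sumr sum_indicator mulr1.
Qed.

Lemma traj_weight_mixture L tr :
  traj_weight (upd F i f) tr =
  \sum_(h : L.-tuple 'I_k.+1) hist_weight f h * traj_weight (upd F i (replay f h)) tr.
Proof.
pose G h := hist_weight f h * traj_weight (upd F i (replay f h)) tr.
elim: L => [|L IH].
  by rewrite (big_tuple0 _ G) /G /hist_weight chain_weight_nil mul1r replay_nil.
rewrite (big_tuple_rcons _ _ G) IH; apply: eq_bigr => h _.
rewrite traj_weight_replay_step // mulr_sumr; apply: eq_bigr => a _.
by rewrite /G /hist_weight chain_weight_rcons mulrA.
Qed.

Lemma prob_pending_mixture L t :
  prob_pending (upd F i f) i t =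
  \sum_(h : L.-tuple 'I_k.+1) hist_weight f h * prob_pending (upd F i (replay f h)) i t.
Proof.
rewrite /prob_pending; under eq_bigr do rewrite (traj_weight_mixture L).
by rewrite exchange_big; apply: eq_bigr => h _; rewrite mulr_sumr.
Qed.

Lemma latency_mixture L :
  latency (upd F i f) i =
  (\sum_(h : L.-tuple 'I_k.+1) (hist_weight f h)%:E * latency (upd F i (replay f h)) i)%E.
Proof.
have pp_ge0 h t : 0 <= prob_pending (upd F i (replay f h)) i t.
  apply: sumr_ge0 => tr _; apply: traj_weight_ge0.
  by apply: is_protocol_upd => //; apply: is_protocol_replay.
rewrite /latency.
under eq_eseriesr do rewrite (prob_pending_mixture L) -sumEFin.
rewrite nneseries_sum => [|h t _]; last first.
  by rewrite lee_fin mulr_ge0 ?hist_weight_ge0.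
apply: eq_bigr => h _; under eq_eseriesr do rewrite EFinM.
by rewrite nneseriesZl // => t _; rewrite lee_fin.
Qed.

Lemma hist_weight_gt0_consistent tau (h : tau.-tuple 'I_k.+1) :
  0 < hist_weight f h -> consistent (upd F i f) i h.
Proof.
move=> weight_gt0; rewrite /consistent.
(* Under r_i(h) only trajectories following h carry weight, and the h-term of
   the mixture bounds the weight under f' from below. *)
have replay_prot : forall h' j, is_protocol (upd F i (replay f h') j).
  by move=> h'; apply: is_protocol_upd => //; apply: is_protocol_replay.
apply: (lt_le_trans (y := hist_weight f h *
  \sum_(tr : tau.-tuple (aprof n k)) traj_weight (upd F i (replay f h)) tr)).
  by rewrite sum_traj_weight // mulr1.
rewrite (bigID (fun tr : tau.-tuple (aprof n k) => [forall s : 'I_tau,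
  pending_after (take s tr) i ==> (tnth tr s i == tnth h s)])) /=.
rewrite [X in _ * (_ + X)]big1 ?addr0 => [|tr /forallPn [s]]; last first.
  rewrite negb_imply (tnth_nth (aprof0 n k)) (tnth_nth ord0) => /andP [pend dev].
  by apply: (traj_weight_replay_deviate _ _ pend dev); rewrite size_tuple ltn_ord.
rewrite mulr_sumr; apply: ler_sum => tr _.
rewrite (traj_weight_mixture tau tr) (bigD1 h) //= lerDl.
by apply: sumr_ge0 => h' _; rewrite mulr_ge0 ?hist_weight_ge0 ?traj_weight_ge0.
Qed.

End Replay.

End Protocols.

Lemma lee_convex_comb (R : realType) (I : finType) (w : I -> R) (x : \bar R)
    (y : I -> \bar R) :
  (forall j, 0 <= w j) -> \sum_j w j = 1 -> (forall j, 0 < w j -> (x <= y j)%E) ->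
  (x <= \sum_j (w j)%:E * y j)%E.
Proof.
move=> w_ge0 w_sum1 le_xy.
rewrite -[x]mul1e -w_sum1 -sumEFin ge0_sume_distrl => [|j _]; last by rewrite lee_fin.
apply: lee_sum => j _; have := w_ge0 j; rewrite le_eqVlt => /predU1P [<-|w_gt0].
  by rewrite !mul0e.
by rewrite lee_wpmul2l ?lee_fin ?w_ge0 ?le_xy.
Qed.

Theorem corollary1 (R : realType) (n k : nat) (F : 'I_n -> protocol R k)
  (i : 'I_n) (f' : protocol R k) :
  (forall j, is_protocol (F j)) -> is_protocol f' ->
  (exists tau : nat, (1 <= tau)%N /\
     forall h : tau.-tuple 'I_k.+1, consistent (upd F i f') i h ->
       (latency F i <= latency (upd F i (replay f' h)) i)%E) ->
  (latency F i <= latency (upd F i f') i)%E.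
Proof.
move=> F_prot f_prot [tau [_ replay_no_better]].
rewrite (latency_mixture i F_prot f_prot tau).
apply: lee_convex_comb => [h||h weight_gt0].
- exact: hist_weight_ge0.
- exact: sum_hist_weight.
- by apply: replay_no_better; apply: hist_weight_gt0_consistent.
Qed.
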